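(* Let $P$ be a poset, equipped with its order topology, such that (i) every element of $P$ has finite height, and (ii) every down-equivalence class of $P$ is countable. Then any two elements of $\mathrm{Homeo}(P)$ are isotopic if and only if they are equal.
   Context: The order topology on a poset $P$ declares the lower sets open, where $S\subseteq P$ is a lower set if $a\le b$ and $b\in S$ imply $a\in S$; continuous maps are exactly order-preserving maps. A chain of length $n$ is a sequence of distinct points $a_0<a_1<\cdots<a_n$ in $P$. The height of $a\in P$ is $\mathrm{Ht}(a)=\sup\{n\in\mathbb{N}\cup\{\infty\}:\exists\, a_0<\cdots<a_n=a\}$. Two elements $a,a'\in P$ are down-equivalent if for all $b\in P$, $b<a$ iff $b<a'$; this is an equivalence relation. $\mathrm{Homeo}(P)$ is the group of homeomorphisms of $P$; two homeomorphisms $f,g$ are isotopic if there is a continuous $H:P\times[0,1]\to P$ with each $H_t=H(\cdot,t)$ a homeomorphism, $H_0=f$, $H_1=g$. *)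

From HB Require Import structures.
From mathcomp Require Import all_boot all_order all_algebra.
From mathcomp Require Import all_classical all_reals all_analysis.
Set Implicit Arguments. Unset Strict Implicit. Unset Printing Implicit Defensive.
Import Order.TTheory GRing.Theory Num.Theory.
Local Open Scope classical_set_scope.

Definition lower_set (d : Order.disp_t) (T : porderType d) (S : set T) : Prop :=
  forall a b : T, (a <= b)%O -> S b -> S a.

(* Alias of a poset carrying its order topology: the open sets are exactly
   the lower sets. *)
Definition ordtop (d : Order.disp_t) (T : porderType d) : Type := T.

Section OrdTop.
Context (d : Order.disp_t) (T : porderType d).

HB.instance Definition _ := Choice.on (ordtop T).
HB.instance Definition _ := Order.POrder.on (ordtop T).

Lemma lower_setT : lower_set [set: T].
Proof. by []. Qed.

Lemma lower_setI : setI_closed (@lower_set d T).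
Proof.
move=> A B hA hB a b ab [Ab Bb]; split; [exact: hA ab Ab | exact: hB ab Bb].
Qed.

Lemma lower_set_bigU (I : Type) (f : I -> set T) :
  (forall i, lower_set (f i)) -> lower_set (\bigcup_i f i).
Proof. by move=> hf a b ab [i _ fib]; exists i => //; exact: hf ab fib. Qed.

HB.instance Definition _ := isOpenTopological.Build (ordtop T)
  lower_setT lower_setI lower_set_bigU.
End OrdTop.

Definition is_homeo (X : topologicalType) (f : X -> X) : Prop :=
  exists g : X -> X, [/\ cancel f g, cancel g f, continuous f & continuous g].

Definition isotopic (R : realType) (X : topologicalType) (f g : X -> X) : Prop :=
  exists H : X * R -> X,
    [/\ {within [set: X] `*` `[0%R, 1%R], continuous H},
        (forall t : R, `[0%R, 1%R] t -> is_homeo (fun x => H (x, t))),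
        (forall x, H (x, 0%R) = f x) &
        (forall x, H (x, 1%R) = g x)].

Definition chain_to (d : Order.disp_t) (T : porderType d) (n : nat)
    (c : nat -> T) (a : T) : Prop :=
  (forall i, (i < n)%N -> (c i < c i.+1)%O) /\ c n = a.

Definition finite_height (d : Order.disp_t) (T : porderType d) (a : T) : Prop :=
  exists N : nat, forall (n : nat) (c : nat -> T), chain_to n c a -> (n <= N)%N.

Definition down_equiv (d : Order.disp_t) (T : porderType d) (a a' : T) : Prop :=
  forall b : T, (b < a)%O <-> (b < a')%O.

Definition down_class (d : Order.disp_t) (T : porderType d) (a : T) : set T :=
  [set a' | down_equiv a a'].

From HB Require Import structures.
From mathcomp Require Import all_boot all_order all_algebra.
From mathcomp Require Import all_classical all_reals all_analysis.
Import Order.TTheory GRing.Theory Num.Theory.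
Set Implicit Arguments. Unset Strict Implicit.
Import numFieldNormedType.Exports.
Local Open Scope classical_set_scope.

(* In the order topology the principal down-sets [set y | y <= a] are open,
   so continuous maps are order preserving and continuous injections are
   strictly increasing.  If h1, h2 are homeomorphisms with h1 x <= h2 x, then
   k := h2^-1 \o h1 is strictly increasing with k x <= x; were k x < x, the
   iterates of k below x would give arbitrarily long chains ending at x,
   contradicting the finite height of x.  Hence h1 x <= h2 x forces
   h1 x = h2 x.  Along an isotopy H, continuity at (x, t) makes
   H (x, t') <= H (x, t) for t' near t, hence H (x, t') = H (x, t): the track
   t |-> H (x, t) is locally constant on the connected interval [0, 1], hence
   constant, and f x = H (x, 0) = H (x, 1) = g x. *)

Lemma locally_constant_connected (X : topologicalType) (Y : Type)
    (A : set X) (phi : X -> Y) :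
  connected A ->
  (forall t, A t -> \forall s \near t, A s -> phi s = phi t) ->
  forall s t, A s -> A t -> phi s = phi t.
Proof.
move=> cA loc s t As At.
pose Eq := [set u | A u -> phi u = phi t].
pose Neq := [set u | A u -> phi u <> phi t].
suff EqA : [set u | A u /\ phi u = phi t] = A by move: As; rewrite -EqA => -[].
apply: cA; first by exists t.
- exists (interior Eq); first exact: open_interior.
  apply/seteqP; split=> [u [Au eu]|u [Au /nbhs_singleton eu]]; last first.
    by split=> //; exact: eu.
  split=> //; apply: filterS (loc u Au) => v vu Av; by rewrite vu // eu.
- exists (~` interior Neq); first exact/open_closedC/open_interior.
  apply/seteqP; split=> [u [Au eu]|u [Au nNu]].
    by split=> // /nbhs_singleton /(_ Au).
  split=> //; apply: contrapT => neu; apply: nNu.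
  by apply: filterS (loc u Au) => v vu Av; rewrite vu.
Qed.

Section OrderTopology.
Context (d : Order.disp_t) (T : porderType d).
Implicit Types (a b x : ordtop T) (h : ordtop T -> ordtop T).

Lemma nbhs_down a : nbhs a [set y : ordtop T | (y <= a)%O].
Proof.
apply: open_nbhs_nbhs; split=> /=; last exact: lexx.
by move=> u v uv /= va; exact: le_trans uv va.
Qed.

Lemma continuous_homo h : continuous h -> {homo h : a b / (a <= b)%O}.
Proof.
move=> hc a b ab; have := hc b _ (nbhs_down (h b)).
rewrite nbhsE => -[W [oW Wb] Wh]; exact: Wh (oW a b ab Wb).
Qed.

Lemma continuous_inj_strict h :
  continuous h -> injective h -> {homo h : a b / (a < b)%O}.
Proof.
move=> hc hi a b; rewrite !lt_neqAle => /andP[nab lab].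
by rewrite (inj_eq hi) nab continuous_homo.
Qed.

(* A strictly increasing self-map cannot move a point of finite height
   strictly down: iterating it would build chains of every length. *)
Lemma finite_height_no_descent (k : T -> T) (x : T) :
  finite_height x -> {homo k : a b / (a < b)%O} -> (k x <= x)%O -> k x = x.
Proof.
move=> [N HN] kmono kx; apply/eqP; apply: contraT => nkx.
have descend m : (iter m.+1 k x < iter m k x)%O.
  elim: m => [|m IH] /=; [by rewrite lt_neqAle nkx kx | exact: kmono IH].
suff : (N.+1 <= N)%N by rewrite ltnn.
apply: (HN _ (fun i => iter (N.+1 - i) k x)); split=> [i iN|]; last first.
  by rewrite subnn.
by rewrite -subSS subSn //; exact: descend.
Qed.

Lemma homeo_le_eq h1 h2 x : finite_height x ->
  is_homeo h1 -> is_homeo h2 -> (h1 x <= h2 x)%O -> h1 x = h2 x.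
Proof.
move=> hx [g1 [h1K g1K h1c g1c]] [g2 [h2K g2K h2c g2c]] le12.
pose k := g2 \o h1.
have kc : continuous k by move=> y; apply: continuous_comp; [exact: h1c|exact: g2c].
have ki : injective k := inj_comp (can_inj g2K) (can_inj h1K).
have kx : (k x <= x)%O by rewrite -{2}(h2K x); exact: continuous_homo g2c _ _ le12.
have := finite_height_no_descent hx (continuous_inj_strict kc ki) kx.
by rewrite /k /= => kxx; rewrite -{2}kxx g2K.
Qed.

(* Along an isotopy, the track of a point of finite height is locally
   constant on [0, 1]: nearby times give smaller, hence equal, values. *)
Lemma isotopy_track_locally_constant (R : realType)
    (H : ordtop T * R -> ordtop T) x :
  finite_height x ->
  {within [set: ordtop T] `*` `[0%R, 1%R], continuous H} ->
  (forall t : R, `[0%R, 1%R] t -> is_homeo (fun y => H (y, t))) ->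
  forall t : R, `[0%R, 1%R] t ->
    \forall s \near t, `[0%R, 1%R] s -> H (x, s) = H (x, t).
Proof.
move=> hx Hc Hh t t01.
have : nbhs_subspace (A := [set: ordtop T] `*` (`[0%R, 1%R] : set R)) (x, t)
    (H @^-1` [set y | (y <= H (x, t))%O]) by exact: Hc _ _ (nbhs_down _).
rewrite -nbhs_subspace_in // => -[[Q S] [Qx St] QS].
apply: filterS St => s Ss s01.
apply: homeo_le_eq hx (Hh s s01) (Hh t t01) _.
by apply: (QS (x, s)); split=> //; exact: nbhs_singleton Qx.
Qed.

Lemma isotopic_eq (R : realType) (f g : ordtop T -> ordtop T) :
  (forall a : T, finite_height a) -> isotopic R f g -> f = g.
Proof.
move=> hfin [H [Hc Hh H0 H1]]; apply: funext => x.
have in01 (t : R) : (0 <= t <= 1)%R -> `[0%R, 1%R] t by rewrite /= in_itv.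
have const_track := @locally_constant_connected R _ (`[0%R, 1%R] : set R)
  (fun t => H (x, t)) (@segment_connected R 0 1)
  (isotopy_track_locally_constant (hfin x) Hc Hh).
by rewrite -H0 -H1 (const_track 0%R 1%R) //; apply: in01; rewrite lexx ler01.
Qed.

Lemma isotopic_refl (R : realType) (f : ordtop T -> ordtop T) :
  is_homeo f -> isotopic R f f.
Proof.
move=> hf; exists (fun p => f p.1); split=> //.
apply: continuous_subspaceT => p; have [_ [_ _ fc _]] := hf.
by apply: continuous_comp; [exact: cvg_fst | exact: fc].
Qed.

End OrderTopology.

Theorem theorem3p3 (R : realType) (d : Order.disp_t) (T : porderType d)
  (hfin : forall a : T, finite_height a)
  (hcount : forall a : T, countable (down_class a))
  (f g : ordtop T -> ordtop T) :
  is_homeo f -> is_homeo g -> (isotopic R f g <-> f = g).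
Proof.
move=> hf _; split; first exact: isotopic_eq.
by move=> <-; exact: isotopic_refl.
Qed.
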